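(* Let $\mathcal{D}=\{(X_i,B_i):i\in I\}$ be a collection of random variable/nonempty event pairs with coherent$_1$ conditional previsions $\{P(X_i\mid B_i):i\in I\}$. Let $X$ be a random variable and $B$ a nonempty event such that $(B,\Omega)\in\mathcal{D}$ and $(XB,\Omega)\in\mathcal{D}$, where $XB$ is the product of $X$ with the indicator of $B$, and $P(B)=P(B\mid\Omega)=0$. (1) If $P(XB)=P(XB\mid\Omega)\ne0$, the only value $p$ for which the previsions in $\mathcal{D}$ together with $P(X\mid B)=p$ are coherent$_1$ is the infinite value with the same sign as $P(XB)$. (2) If $P(XB)=0$, then for every extended real number $p$, the previsions in $\mathcal{D}$ together with $P(X\mid B)=p$ are coherent$_1$.
   Context: Let $\Omega$ be a nonempty set of states $\omega$; events are subsets of $\Omega$ and random variables are real-valued functions on $\Omega$. An event $B$ is identified with its indicator function. A conditional prevision $P(X\mid B)$ is an extended real number; $P(X)=P(X\mid\Omega)$. Coherence$_1$: a collection $\{P(X_i\mid B_i):i\in I\}$ is coherent$_1$ if for every finite $\{i_1,\dots,i_n\}\subseteq I$, all real $\alpha_1,\dots,\alpha_n$ with $\alpha_j\ge 0$ whenever $P(X_{i_j}\mid B_{i_j})=+\infty$ and $\alpha_j\le 0$ whenever $P(X_{i_j}\mid B_{i_j})=-\infty$, and all real $c_1,\dots,c_n$ with $c_j=P(X_{i_j}\mid B_{i_j})$ whenever that prevision is finite, we have $\sup_\omega \sum_{j=1}^n \alpha_j B_{i_j}(\omega)[X_{i_j}(\omega)-c_j]\ge 0$. *)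

From Stdlib Require Import Reals List.
From Coquelicot Require Import Rbar.
Open Scope R_scope.

(* Events are boolean predicates on Omega, identified with their indicators. *)
Definition indic {Omega : Type} (B : Omega -> bool) (w : Omega) : R :=
  if B w then 1 else 0.

Definition nonempty_event {Omega : Type} (B : Omega -> bool) : Prop :=
  exists w, B w = true.

Definition full_event {Omega : Type} : Omega -> bool := fun _ => true.

(* A finite subfamily is a duplicate-free list l of indices; the
   coefficients alpha and constants c are given as functions on I.
   "sup_w G(w) >= 0" is written as: for every eps > 0 some w has G(w) > -eps. *)
Definition coherent1 {Omega I : Type} (X : I -> Omega -> R)
    (B : I -> Omega -> bool) (P : I -> Rbar) : Prop :=
  forall (l : list I), NoDup l ->
  forall (alpha c : I -> R),
    (forall i, In i l -> P i = p_infty -> 0 <= alpha i) ->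
    (forall i, In i l -> P i = m_infty -> alpha i <= 0) ->
    (forall i, In i l -> forall r, P i = Finite r -> c i = r) ->
    forall eps, 0 < eps ->
      exists w : Omega,
        - eps < fold_right Rplus 0
                  (map (fun i => alpha i * indic (B i) w * (X i w - c i)) l).

(* The family D extended by one new element (Y, C) with prevision p,
   indexed by option I (None is the new element). *)
Definition extX {Omega I : Type} (X : I -> Omega -> R) (Y : Omega -> R)
  : option I -> Omega -> R :=
  fun o => match o with Some i => X i | None => Y end.
Definition extB {Omega I : Type} (B : I -> Omega -> bool) (C : Omega -> bool)
  : option I -> Omega -> bool :=
  fun o => match o with Some i => B i | None => C end.
Definition extP {I : Type} (P : I -> Rbar) (p : Rbar) : option I -> Rbar :=
  fun o => match o with Some i => P i | None => p end.

(* Since P(B) = 0, the gamble of the new assessment splits as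
     B (X - c) = (XB - d) - c (B - P(B)) + d
   for any admissible constant d of XB.  When d can be chosen with a d >= 0
   for the coefficient a of the new gamble (always if P(XB) = 0; if P(XB) <> 0
   exactly when a has the sign of P(XB)), every gain of the extended family
   dominates a gain of the original one, so coherence is inherited.
   Conversely, the gamble s B (X - c) - s (XB - P(XB)) + s c B is the constant
   s P(XB), a sure loss whenever s may have the sign opposite to P(XB); only
   the infinite value with the sign of P(XB) forbids every such s. *)
From Stdlib Require Import Reals List Lra Psatz ClassicalEpsilon.
From Coquelicot Require Import Rbar.
Open Scope R_scope.

Definition admissible (v : Rbar) (a c : R) : Prop :=
  match v with
  | Finite r => c = r
  | p_infty => 0 <= a
  | m_infty => a <= 0
  end.

Definition admissible_on {I : Type} (P : I -> Rbar) (l : list I) (alpha c : I -> R) :=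
  forall i, In i l -> admissible (P i) (alpha i) (c i).

Definition gain {Omega I : Type} (X : I -> Omega -> R) (B : I -> Omega -> bool)
    (l : list I) (alpha c : I -> R) (w : Omega) : R :=
  fold_right Rplus 0 (map (fun i => alpha i * indic (B i) w * (X i w - c i)) l).

Definition sup_nonneg {Omega : Type} (f : Omega -> R) : Prop :=
  forall eps, 0 < eps -> exists w, - eps < f w.

Lemma sup_nonneg_le {Omega : Type} (f g : Omega -> R) :
  (forall w, f w <= g w) -> sup_nonneg f -> sup_nonneg g.
Proof.
  intros Hfg Hf eps Heps. destruct (Hf eps Heps) as [w Hw].
  exists w. specialize (Hfg w). lra.
Qed.

Lemma coherent1E {Omega I : Type} (X : I -> Omega -> R) (B : I -> Omega -> bool)
    (P : I -> Rbar) :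
  coherent1 X B P <->
  forall l alpha c, NoDup l -> admissible_on P l alpha c -> sup_nonneg (gain X B l alpha c).
Proof.
  split.
  - intros Hcoh l alpha c Hnd Hadm eps Heps.
    apply (Hcoh l Hnd alpha c); [| | |exact Heps].
    + intros i Hi HPi. specialize (Hadm i Hi). now rewrite HPi in Hadm.
    + intros i Hi HPi. specialize (Hadm i Hi). now rewrite HPi in Hadm.
    + intros i Hi r HPi. specialize (Hadm i Hi). now rewrite HPi in Hadm.
  - intros Hcoh l Hnd alpha c Hp Hm Hf. apply (Hcoh l alpha c Hnd).
    intros i Hi. specialize (Hp i Hi). specialize (Hm i Hi). specialize (Hf i Hi).
    destruct (P i); simpl; auto.
Qed.

Lemma indic_nonneg {Omega : Type} (B : Omega -> bool) (w : Omega) : 0 <= indic B w.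
Proof. unfold indic. destruct (B w); lra. Qed.

(* Two terms on the same index combine into one; for an infinite prevision the
   free constant is replaced by the more favourable of the two. *)
Lemma admissible_merge (v : Rbar) (a1 c1 a2 c2 : R) :
  admissible v a1 c1 -> admissible v a2 c2 ->
  exists c, admissible v (a1 + a2) c /\
    forall t x, 0 <= t -> (a1 + a2) * t * (x - c) <= a1 * t * (x - c1) + a2 * t * (x - c2).
Proof.
  destruct v as [r| |]; simpl.
  - intros -> ->. exists r. split; [reflexivity|]. intros t x _. apply Req_le. ring.
  - intros Ha1 Ha2. exists (Rmax c1 c2). split; [lra|]. intros t x Ht.
    assert (t * c1 <= t * Rmax c1 c2) by (apply Rmult_le_compat_l; [lra|apply Rmax_l]).
    assert (t * c2 <= t * Rmax c1 c2) by (apply Rmult_le_compat_l; [lra|apply Rmax_r]).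
    nra.
  - intros Ha1 Ha2. exists (Rmin c1 c2). split; [lra|]. intros t x Ht.
    assert (t * Rmin c1 c2 <= t * c1) by (apply Rmult_le_compat_l; [lra|apply Rmin_l]).
    assert (t * Rmin c1 c2 <= t * c2) by (apply Rmult_le_compat_l; [lra|apply Rmin_r]).
    nra.
Qed.

Definition upd {I : Type} (f : I -> R) (j : I) (v : R) : I -> R :=
  fun i => if excluded_middle_informative (i = j) then v else f i.

Lemma upd_same {I : Type} (f : I -> R) j v : upd f j v j = v.
Proof. unfold upd. now destruct excluded_middle_informative. Qed.

Lemma upd_other {I : Type} (f : I -> R) j v i : i <> j -> upd f j v i = f i.
Proof. unfold upd. now destruct excluded_middle_informative. Qed.

Section Gain.
Variables (Omega I : Type) (X : I -> Omega -> R) (B : I -> Omega -> bool).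

Lemma gain_cons k l alpha c w :
  gain X B (k :: l) alpha c w = alpha k * indic (B k) w * (X k w - c k) + gain X B l alpha c w.
Proof. reflexivity. Qed.

Lemma gain_upd_notin l alpha c j a d w :
  ~ In j l -> gain X B l (upd alpha j a) (upd c j d) w = gain X B l alpha c w.
Proof.
  induction l as [|k l IH]; intros Hj; [reflexivity|]. simpl in Hj.
  rewrite !gain_cons, !upd_other by (intros ->; tauto). rewrite IH by tauto. reflexivity.
Qed.

Lemma gain_upd_in l alpha c j a d w :
  NoDup l -> In j l ->
  gain X B l (upd alpha j a) (upd c j d) w =
  gain X B l alpha c w + (a * indic (B j) w * (X j w - d)
                          - alpha j * indic (B j) w * (X j w - c j)).
Proof.
  induction l as [|k l IH]; intros Hnd Hj; [destruct Hj|]. rewrite !gain_cons.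
  inversion Hnd as [|? ? Hk Hl]; subst.
  destruct (excluded_middle_informative (k = j)) as [->|Hkj].
  - rewrite !upd_same, gain_upd_notin by exact Hk. ring.
  - destruct Hj as [->|Hj]; [contradiction|].
    rewrite !upd_other by exact Hkj. rewrite IH by assumption. ring.
Qed.

Lemma gain_middle l1 x l2 alpha c w :
  gain X B (l1 ++ x :: l2) alpha c w =
  alpha x * indic (B x) w * (X x w - c x) + gain X B (l1 ++ l2) alpha c w.
Proof. induction l1 as [|k l1 IH]; [reflexivity|]. simpl app. rewrite !gain_cons, IH. ring. Qed.

Lemma admissible_add_term P l alpha c j a d :
  NoDup l -> admissible_on P l alpha c -> admissible (P j) a d ->
  exists l' alpha' c', NoDup l' /\ admissible_on P l' alpha' c' /\
    forall w, gain X B l' alpha' c' w <= gain X B l alpha c w + a * indic (B j) w * (X j w - d).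
Proof.
  intros Hnd Hadm Hjad.
  destruct (excluded_middle_informative (In j l)) as [Hj|Hj].
  - destruct (admissible_merge _ _ _ _ _ (Hadm j Hj) Hjad) as [cm [Hcm Hmerge]].
    exists l, (upd alpha j (alpha j + a)), (upd c j cm). split; [exact Hnd|split].
    + intros i Hi. destruct (excluded_middle_informative (i = j)) as [->|Hij].
      * now rewrite !upd_same.
      * rewrite !upd_other by exact Hij. exact (Hadm i Hi).
    + intros w. rewrite gain_upd_in by assumption.
      specialize (Hmerge (indic (B j) w) (X j w) (indic_nonneg _ _)). lra.
  - exists (j :: l), (upd alpha j a), (upd c j d). split; [now constructor|split].
    + intros i [<-|Hi].
      * now rewrite !upd_same.
      * rewrite !upd_other by (intros ->; contradiction). exact (Hadm i Hi).
    + intros w. rewrite gain_cons, !upd_same, gain_upd_notin by exact Hj. lra.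
Qed.

End Gain.

Fixpoint somes {I : Type} (l : list (option I)) : list I :=
  match l with
  | nil => nil
  | Some i :: t => i :: somes t
  | None :: t => somes t
  end.

Lemma in_somes {I : Type} (l : list (option I)) i : In i (somes l) -> In (Some i) l.
Proof.
  induction l as [|[j|] t IH]; simpl; [tauto| |]; intros H.
  - destruct H as [->|H]; auto.
  - auto.
Qed.

Lemma NoDup_somes {I : Type} (l : list (option I)) : NoDup l -> NoDup (somes l).
Proof.
  induction l as [|[j|] t IH]; simpl; intros H; inversion H as [|? ? Hn Ht]; subst;
    try constructor; auto.
  intros Hj. apply Hn, in_somes, Hj.
Qed.

Lemma admissible_on_somes {I : Type} (P : I -> Rbar) p l (alpha c : option I -> R) :
  admissible_on (extP P p) l alpha c ->
  admissible_on P (somes l) (fun i => alpha (Some i)) (fun i => c (Some i)).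
Proof. intros Hadm i Hi. exact (Hadm (Some i) (in_somes l i Hi)). Qed.

Lemma gain_extX_somes {Omega I : Type} (XD : I -> Omega -> R) (BD : I -> Omega -> bool)
    (Y : Omega -> R) (C : Omega -> bool) l alpha c w :
  ~ In None l ->
  gain (extX XD Y) (extB BD C) l alpha c w =
  gain XD BD (somes l) (fun i => alpha (Some i)) (fun i => c (Some i)) w.
Proof.
  induction l as [|[j|] t IH]; simpl; intros HN; [reflexivity| |tauto].
  rewrite !gain_cons, IH by tauto. reflexivity.
Qed.

Definition compatible (p q : Rbar) : Prop :=
  forall a c, admissible p a c -> exists d, admissible q a d /\ 0 <= a * d.

Lemma compatible_zero (p : Rbar) : compatible p (Finite 0).
Proof. intros a c _. exists 0. split; [reflexivity|]. rewrite Rmult_0_r. lra. Qed.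

Lemma compatible_sign (q : Rbar) :
  compatible (if Rbar_lt_dec (Finite 0) q then p_infty else m_infty) q.
Proof.
  intros a c. destruct (Rbar_lt_dec (Finite 0) q) as [Hpos|Hnpos]; simpl; intros Ha;
    destruct q as [r| |]; simpl in *; try contradiction.
  - exists r. split; [reflexivity|]. nra.
  - exists 0. split; [exact Ha|]. rewrite Rmult_0_r. lra.
  - exists r. split; [reflexivity|]. nra.
  - exists 0. split; [exact Ha|]. rewrite Rmult_0_r. lra.
Qed.

Lemma sign_forced (p q : Rbar) :
  q <> Finite 0 ->
  (forall s cN cX, admissible p s cN -> admissible q (- s) cX -> 0 <= s * cX) ->
  p = if Rbar_lt_dec (Finite 0) q then p_infty else m_infty.
Proof.
  intros Hq Hsign. destruct (Rbar_lt_dec (Finite 0) q) as [Hpos|Hnpos].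
  - assert (HcX : exists cX, admissible q 1 cX /\ 0 < cX).
    { destruct q as [r| |]; simpl in *; [exists r| exists 1|]; tauto || lra. }
    destruct HcX as [cX [HcX Hc]].
    replace 1 with (- -1) in HcX by ring.
    destruct p as [x| |]; [exfalso|reflexivity|exfalso].
    + assert (H := Hsign (-1) x cX eq_refl HcX). lra.
    + assert (H := Hsign (-1) 0 cX ltac:(simpl; lra) HcX). lra.
  - assert (HcX : exists cX, admissible q (-1) cX /\ cX < 0).
    { destruct q as [r| |]; simpl in *; [exists r| |exists (-1)].
      - split; [reflexivity|]. assert (r <> 0) by congruence. lra.
      - tauto.
      - lra. }
    destruct HcX as [cX [HcX Hc]].
    destruct p as [x| |]; [exfalso|exfalso|reflexivity].
    + assert (H := Hsign 1 x cX eq_refl HcX). lra.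
    + assert (H := Hsign 1 0 cX ltac:(simpl; lra) HcX). lra.
Qed.

Section Extension.
Variables (Omega I : Type) (XD : I -> Omega -> R) (BD : I -> Omega -> bool) (P : I -> Rbar)
  (X : Omega -> R) (B : Omega -> bool) (iB iXB : I).
Hypothesis HiB : XD iB = indic B /\ BD iB = full_event.
Hypothesis HiXB : XD iXB = (fun w => X w * indic B w) /\ BD iXB = full_event.
Hypothesis HPB : P iB = Finite 0.

Lemma sup_nonneg_gain_plus_new_term (Hcoh : coherent1 XD BD P) (p : Rbar)
    (Hcomp : compatible p (P iXB)) l alpha c aN cN :
  NoDup l -> admissible_on P l alpha c -> admissible p aN cN ->
  sup_nonneg (fun w => gain XD BD l alpha c w + aN * indic B w * (X w - cN)).
Proof.
  intros Hnd Hadm HaN.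
  destruct (Hcomp aN cN HaN) as [d [Hd Hsign]].
  destruct (admissible_add_term _ _ XD BD P l alpha c iXB aN d Hnd Hadm Hd)
    as (l1 & alpha1 & c1 & Hnd1 & Hadm1 & Hle1).
  assert (HB0 : admissible (P iB) (- (aN * cN)) 0) by (rewrite HPB; reflexivity).
  destruct (admissible_add_term _ _ XD BD P l1 alpha1 c1 iB _ _ Hnd1 Hadm1 HB0)
    as (l2 & alpha2 & c2 & Hnd2 & Hadm2 & Hle2).
  apply (sup_nonneg_le (gain XD BD l2 alpha2 c2)).
  - intros w. specialize (Hle1 w). specialize (Hle2 w).
    destruct HiB as [HX_iB HB_iB], HiXB as [HX_iXB HB_iXB].
    rewrite HX_iXB, HB_iXB in Hle1. rewrite HX_iB, HB_iB in Hle2.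
    change (indic full_event w) with 1 in Hle1, Hle2. lra.
  - exact (proj1 (coherent1E XD BD P) Hcoh l2 alpha2 c2 Hnd2 Hadm2).
Qed.

Lemma coherent1_extend (Hcoh : coherent1 XD BD P) (p : Rbar) :
  compatible p (P iXB) -> coherent1 (extX XD X) (extB BD B) (extP P p).
Proof.
  intros Hcomp. apply coherent1E. intros l alpha c Hnd Hadm.
  destruct (excluded_middle_informative (In None l)) as [HN|HN].
  - destruct (in_split _ _ HN) as (l1 & l2 & ->).
    assert (HN' : ~ In None (l1 ++ l2)) by exact (NoDup_remove_2 _ _ _ Hnd).
    assert (Hadm' : admissible_on (extP P p) (l1 ++ l2) alpha c).
    { intros i Hi. apply Hadm, in_or_app. apply in_app_or in Hi. simpl. tauto. }
    apply sup_nonneg_le with (f := fun w =>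
      gain XD BD (somes (l1 ++ l2)) (fun i => alpha (Some i)) (fun i => c (Some i)) w
      + alpha None * indic B w * (X w - c None)).
    + intros w. rewrite gain_middle, gain_extX_somes by exact HN'. simpl. lra.
    + apply (sup_nonneg_gain_plus_new_term Hcoh p Hcomp).
      * exact (NoDup_somes _ (NoDup_remove_1 _ _ _ Hnd)).
      * exact (admissible_on_somes _ _ _ _ _ Hadm').
      * exact (Hadm None (in_elt _ _ _)).
  - apply sup_nonneg_le with (f := fun w =>
      gain XD BD (somes l) (fun i => alpha (Some i)) (fun i => c (Some i)) w
      + 0 * indic B w * (X w - real p)).
    + intros w. rewrite gain_extX_somes by exact HN. lra.
    + apply (sup_nonneg_gain_plus_new_term Hcoh p Hcomp).
      * exact (NoDup_somes _ Hnd).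
      * exact (admissible_on_somes _ _ _ _ _ Hadm).
      * destruct p; simpl; reflexivity || lra.
Qed.

Lemma coherent1_extend_sign (p : Rbar) (HXB_B : iXB <> iB) :
  coherent1 (extX XD X) (extB BD B) (extP P p) ->
  forall s cN cX, admissible p s cN -> admissible (P iXB) (- s) cX -> 0 <= s * cX.
Proof.
  intros Hc s cN cX Hs HcX.
  set (alpha := fun o => match o with None => s | Some i => upd (fun _ => s * cN) iXB (- s) i end).
  set (c := fun o => match o with None => cN | Some i => upd (fun _ => 0) iXB cX i end).
  set (l := None :: Some iXB :: Some iB :: nil).
  assert (Hnd : NoDup l).
  { repeat constructor; simpl; intros H; repeat destruct H as [H|H]; congruence. }
  assert (Hadm : admissible_on (extP P p) l alpha c).
  { intros i Hi. repeat destruct Hi as [<-|Hi]; simpl; try contradiction.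
    - exact Hs.
    - rewrite !upd_same. exact HcX.
    - rewrite !upd_other by congruence. rewrite HPB. reflexivity. }
  assert (Hconst : forall w, gain (extX XD X) (extB BD B) l alpha c w = s * cX).
  { intros w. unfold gain; simpl. rewrite !upd_same, !upd_other by congruence.
    destruct HiB as [-> ->]. destruct HiXB as [-> ->].
    change (indic full_event w) with 1. ring. }
  apply Rnot_lt_le. intros Hneg.
  destruct (proj1 (coherent1E _ _ _) Hc l alpha c Hnd Hadm (- (s * cX))) as [w Hw]; [lra|].
  rewrite Hconst in Hw. lra.
Qed.

End Extension.

Theorem lemma6p2 (Omega : Type) (w0 : Omega) (I : Type)
  (XD : I -> Omega -> R) (BD : I -> Omega -> bool) (P : I -> Rbar)
  (HBD : forall i, nonempty_event (BD i))
  (Hcoh : coherent1 XD BD P)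
  (X : Omega -> R) (B : Omega -> bool) (HB : nonempty_event B)
  (iB iXB : I)
  (HiB : XD iB = indic B /\ BD iB = full_event)
  (HiXB : XD iXB = (fun w => X w * indic B w) /\ BD iXB = full_event)
  (HPB : P iB = Finite 0) :
  (P iXB <> Finite 0 ->
     forall p : Rbar,
       coherent1 (extX XD X) (extB BD B) (extP P p) <->
       p = (if Rbar_lt_dec (Finite 0) (P iXB) then p_infty else m_infty))
  /\
  (P iXB = Finite 0 ->
     forall p : Rbar, coherent1 (extX XD X) (extB BD B) (extP P p)).
Proof.
  split.
  - intros HPXB p.
    assert (HXB_B : iXB <> iB) by (intros E; apply HPXB; rewrite E; exact HPB).
    split.
    + intros Hc. apply sign_forced; [exact HPXB|].
      exact (coherent1_extend_sign _ _ _ _ _ _ _ _ _ HiB HiXB HPB p HXB_B Hc).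
    + intros ->. apply (coherent1_extend _ _ _ _ _ _ _ _ _ HiB HiXB HPB Hcoh).
      apply compatible_sign.
  - intros HPXB p. apply (coherent1_extend _ _ _ _ _ _ _ _ _ HiB HiXB HPB Hcoh).
    rewrite HPXB. apply compatible_zero.
Qed.
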